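(* Let $\mathcal{T} = \{\tau_1, \ldots, \tau_{i-1}, \tau_i\}$ be a set of tasks scheduled by preemptive fixed-priority scheduling on a single processor, ordered by decreasing priority ($\tau_1$ highest), where each task $\tau_j$ has worst-case computation time $C_j$, period (minimum inter-arrival time) $T_j$ and relative deadline $D_j$ (possibly $D_j > T_j$), with zero jitter. Let $H_i = \mathrm{lcm}(T_1, \ldots, T_i)$ and $h_i = H_i / T_i$. For $h \geq 1$, let $\mathcal{T}^{(h)}$ be the task set obtained from $\mathcal{T}$ by replacing $\tau_i$ with a task $\tau_i^{(h)}$ having computation time $C_i^{(h)} = h C_i$, deadline $D_i^{(h)} = (h-1) T_i + D_i$, the same period $T_i$ and the same priority as $\tau_i$. If for every $h = 1, \ldots, h_i$ the task $\tau_i^{(h)}$ completes before its deadline when scheduled in $\mathcal{T}^{(h)}$, then the first $h_i$ jobs of $\tau_i$ (scheduled in $\mathcal{T}$) also complete before their deadlines.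
   Context: A task $\tau_j$ releases an infinite sequence of jobs; the $k$-th job is activated at $a_{j,k}$, consecutive activations being separated by (at least) $T_j$, executes for at most $C_j$ time units and must finish by $a_{j,k} + D_j$. Under preemptive fixed-priority scheduling, at any time the processor executes the pending job of highest priority, and jobs of a task are executed in activation order (a job cannot start before the previous job of the same task has completed). *)

From mathcomp Require Import all_boot.
Set Implicit Arguments. Unset Strict Implicit. Unset Printing Implicit Defensive.

Record task := Task { C : nat; T : nat; D : nat }.

Definition dflt_task : task := Task 0 1 0.

(* Work of a task released in the time window [0, t] in the synchronous
   periodic scenario with zero jitter: jobs k = 0,1,... are activated at
   k * T, each requiring exactly C time units. *)
Definition released_work (tk : task) (t : nat) : nat := (t %/ T tk).+1 * C tk.

(* Preemptive fixed-priority schedule of the task set [ts] (index 0 = highest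
   priority) on one processor, in unit time slots [t, t+1).
   [service ts t j] = amount of processing received by task j in [0, t).
   Since jobs of a task run in activation order, this cumulative service
   determines the state of every job: job k of task j has completed by time t
   iff (k+1) * C_j <= service ts t j.  In slot t the processor runs the
   highest-priority task that has pending (released, unfinished) work. *)
Fixpoint service (ts : seq task) (t : nat) : nat -> nat :=
  match t with
  | 0 => fun _ => 0
  | t'.+1 =>
      let s := service ts t' in
      let sel := find (fun j => s j < released_work (nth dflt_task ts j) t')
                      (iota 0 (size ts)) in
      fun j => s j + (j == sel)
  end.

(* Job k (0-based: activated at k*T_j) of task j completes by its absolute
   deadline k*T_j + D_j. *)
Definition job_meets_deadline (ts : seq task) (j k : nat) : bool :=
  let tk := nth dflt_task ts j in
  k.+1 * C tk <= service ts (k * T tk + D tk) j.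

Definition hyperperiod (ts : seq task) : nat := \big[lcmn/1]_(tk <- ts) T tk.

Definition scale_task (h : nat) (tk : task) : task :=
  Task (h * C tk) (T tk) ((h - 1) * T tk + D tk).

From mathcomp Require Import all_boot zify.

(* The higher-priority tasks are scheduled as if tau_i did not exist: their
   service in [0, t) is W t = min_(u <= t) (R u + t - u), where R u is their work
   released before u.  R is subadditive, hence so is W, and the idle time
   I t = t - W t they leave is superadditive: any window of length L contains at
   least I L idle units.  At its deadline t, job k of tau_i has received the
   work of the j jobs released before the start u of its busy window plus all
   idle time of [u, t).  Either j > k, or [u, t) contains a window of length
   L = (k-j) T + D, whose idle time is at least I L >= (k+1-j) C because
   tau_i^(k+1-j), which can only run in idle time, meets its first deadline L. *)

Definition pending (ts : seq task) t j :=
  service ts t j < released_work (nth dflt_task ts j) t.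

Lemma serviceS ts t j :
  service ts t.+1 j = service ts t j + (j == find (pending ts t) (iota 0 (size ts))).
Proof. by []. Qed.

Lemma eq_find_iota (p : pred nat) n j : j < n ->
  (j == find p (iota 0 n)) = p j && ~~ has p (iota 0 j).
Proof.
move=> ltjn; have -> : n = j + (n - j - 1).+1 by lia.
rewrite iotaD find_cat /= add0n size_iota.
have := has_find p (iota 0 j); rewrite size_iota.
case: (has p (iota 0 j)) => /= [lt_find | _]; first by rewrite andbF; apply/negbTE; lia.
by case: (p j); rewrite ?andbT ?addn0 ?eqxx //; apply/negbTE; lia.
Qed.

Lemma ltn_find_iota (p : pred nat) n : (find p (iota 0 n.+1) < n) = has p (iota 0 n).
Proof.
rewrite -[n.+1]addn1 iotaD find_cat size_iota.
have := has_find p (iota 0 n); rewrite size_iota.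
by case: (has p (iota 0 n)) => [<- // | _]; apply/negbTE; lia.
Qed.

Lemma sum_ord_eq m n : \sum_(j < n) ((j : nat) == m : nat) = (m < n).
Proof.
elim: n => [|n IH]; first by rewrite big_ord0.
by rewrite big_ord_recr /= IH; case: ltngtP; lia.
Qed.

Lemma leq_released_work tk [t t'] : t <= t' -> released_work tk t <= released_work tk t'.
Proof. by move=> le_tt'; rewrite leq_mul2r ltnS leq_div2r ?orbT. Qed.

Lemma service_le_released ts t j : j < size ts ->
  service ts t j <= released_work (nth dflt_task ts j) t.
Proof.
move=> ltj; elim: t => [//|t IH]; rewrite serviceS eq_find_iota //.
have le_rw := leq_released_work (nth dflt_task ts j) (leqnSn t).
by case: (boolP (pending ts t j)) => /= [|_]; rewrite /pending; lia.
Qed.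

Definition released_before (tk : task) u :=
  if u is u'.+1 then released_work tk u' else 0.

Lemma released_before_subadd tk a b : 0 < T tk ->
  released_before tk (a + b) <= released_before tk a + released_before tk b.
Proof.
move=> T_gt0; case: a => [//|a]; case: b => [|b]; first by rewrite !addn0.
have -> : a.+1 + b.+1 = (a + b + 1).+1 by lia.
rewrite /released_before /released_work -mulnDl leq_mul2r addSn !ltnS.
apply/orP; right; rewrite -ltnS ltn_divLR //.
have := ltn_ceil a T_gt0; have := ltn_ceil b T_gt0.
set p := a %/ T tk; set q := b %/ T tk; nia.
Qed.

Lemma released_before_jobs tk u : 0 < T tk ->
  exists2 j, released_before tk u = j * C tk & u <= j * T tk.
Proof.
case: u => [|u] T_gt0; first by exists 0.
by exists (u %/ T tk).+1; last exact: ltn_ceil.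
Qed.

Lemma nth_rcons_size (hp : seq task) x : nth dflt_task (rcons hp x) (size hp) = x.
Proof. by rewrite nth_rcons ltnn eqxx. Qed.

Section LowestPriority.

Variables (hp : seq task) (x : task).
Local Notation ts := (rcons hp x).

Definition hp_service t := \sum_(j < size hp) service ts t j.
Definition hp_released t := \sum_(j < size hp) released_work (nth dflt_task hp j) t.
Definition hp_released_before u :=
  \sum_(j < size hp) released_before (nth dflt_task hp j) u.
Definition hp_busy t := has (pending ts t) (iota 0 (size hp)).
Definition hp_idle t := t - hp_service t.

Lemma service_hp_le_released t (j : 'I_(size hp)) :
  service ts t j <= released_work (nth dflt_task hp j) t.
Proof.
have := @service_le_released ts t j; rewrite nth_rcons ltn_ord size_rcons.
by apply; rewrite ltnS ltnW.
Qed.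

Lemma hp_service0 : hp_service 0 = 0.
Proof. exact: big1. Qed.

Lemma hp_serviceS t : hp_service t.+1 = hp_service t + hp_busy t.
Proof.
rewrite /hp_service; under eq_bigr do rewrite serviceS.
by rewrite big_split /= sum_ord_eq size_rcons ltn_find_iota.
Qed.

Lemma hp_service_le_released t : hp_service t <= hp_released t.
Proof. by apply: leq_sum => j _; apply: service_hp_le_released. Qed.

Lemma hp_busyE t : hp_busy t = (hp_service t < hp_released t).
Proof.
apply/idP/idP => [/hasP[j] | lt_sr].
  rewrite mem_iota add0n => /andP[_ ltj]; rewrite /pending nth_rcons ltj => pj.
  rewrite /hp_service /hp_released (bigD1 (Ordinal ltj)) //=.
  rewrite [X in _ < X](bigD1 (Ordinal ltj)) //= -addSn leq_add //.
  by apply: leq_sum => i _; apply: service_hp_le_released.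
apply: contraLR lt_sr => /hasPn idle; rewrite -leqNgt; apply: leq_sum => j _.
have /idle : (j : nat) \in iota 0 (size hp) by rewrite mem_iota add0n ltn_ord.
by rewrite /pending nth_rcons ltn_ord -leqNgt.
Qed.

Lemma hp_released_before0 : hp_released_before 0 = 0.
Proof. exact: big1. Qed.

Lemma hp_released_beforeS t : hp_released_before t.+1 = hp_released t.
Proof. by []. Qed.

Lemma hp_service_min t : hp_service t.+1 = minn (hp_released t) (hp_service t).+1.
Proof.
rewrite hp_serviceS hp_busyE; have := hp_service_le_released t.
by case: ltnP => /=; lia.
Qed.

Lemma hp_service_le [t u] : u <= t -> hp_service t <= hp_released_before u + (t - u).
Proof.
elim: t => [|t IH] le_ut; first by rewrite hp_service0.
rewrite hp_service_min; case: (ltnP t u) => [lt_tu | /[dup] /IH]; last lia.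
have -> : u = t.+1 by lia.
by rewrite hp_released_beforeS subnn addn0 geq_minl.
Qed.

Lemma hp_service_attained t :
  exists2 u, u <= t & hp_service t = hp_released_before u + (t - u).
Proof.
elim: t => [|t [u le_ut IH]]; first by exists 0; rewrite // hp_service0 hp_released_before0.
rewrite hp_service_min IH; case: (leqP (hp_released t) (hp_released_before u + (t - u)).+1).
  by exists t.+1; rewrite // hp_released_beforeS subnn addn0; lia.
by exists u; lia.
Qed.

Lemma hp_service_le_time t : hp_service t <= t.
Proof. by have := hp_service_le (leq0n t); rewrite hp_released_before0 subn0. Qed.

Lemma hp_idleS t : hp_idle t.+1 = hp_idle t + ~~ hp_busy t.
Proof.
have := hp_service_le_time t.+1; have := hp_service_le_time t.
by rewrite /hp_idle hp_serviceS; case: hp_busy => /=; lia.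
Qed.

Lemma leq_hp_idle [u t] : u <= t -> hp_idle u <= hp_idle t.
Proof.
elim: t => [|t IH]; first by rewrite leqn0 => /eqP->.
by rewrite leq_eqVlt ltnS => /predU1P[-> // | /IH]; rewrite hp_idleS; lia.
Qed.

Section PositivePeriods.

Hypothesis hp_periods_gt0 : all (fun tk => 0 < T tk) hp.

Lemma hp_released_before_subadd a b :
  hp_released_before (a + b) <= hp_released_before a + hp_released_before b.
Proof.
rewrite -big_split; apply: leq_sum => j _; apply: released_before_subadd.
exact: (all_nthP dflt_task hp_periods_gt0).
Qed.

Lemma hp_service_subadd a b : hp_service (a + b) <= hp_service a + hp_service b.
Proof.
have [u le_ua ->] := hp_service_attained a; have [v le_vb ->] := hp_service_attained b.
have := hp_service_le (leq_add le_ua le_vb); have := hp_released_before_subadd u v.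
lia.
Qed.

Lemma hp_idle_superadd a b : hp_idle a + hp_idle b <= hp_idle (a + b).
Proof.
have := hp_service_subadd a b; have := hp_service_le_time a.
have := hp_service_le_time b; rewrite /hp_idle; lia.
Qed.

End PositivePeriods.

Lemma lowest_serviceS t : service ts t.+1 (size hp) =
  service ts t (size hp) + (pending ts t (size hp) && ~~ hp_busy t).
Proof. by rewrite serviceS eq_find_iota // size_rcons. Qed.

Lemma lowest_service_le_idle t : service ts t (size hp) <= hp_idle t.
Proof.
elim: t => [//|t IH]; rewrite lowest_serviceS hp_idleS.
by case: pending; case: hp_busy => /=; lia.
Qed.

Lemma lowest_service_busy_window t : exists2 u, u <= t &
  service ts t (size hp) = released_before x u + (hp_idle t - hp_idle u).
Proof.
elim: t => [|t [u le_ut IH]]; first by exists 0.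
have := leq_hp_idle le_ut; have := @service_le_released ts t (size hp).
rewrite size_rcons nth_rcons_size ltnSn => /(_ isT) le_sr le_idle.
rewrite lowest_serviceS hp_idleS; case: (boolP (hp_busy t)) => [_ | idle].
  by exists u; rewrite ?andbF; lia.
case: (boolP (pending ts t (size hp))) => [_ | ]; first by exists u; lia.
rewrite /pending nth_rcons_size -leqNgt => le_rs.
by exists t.+1; rewrite //= hp_idleS idle; lia.
Qed.

End LowestPriority.

Lemma hp_service_indep hp x y t : hp_service hp x t = hp_service hp y t.
Proof. by elim: t => [|t IH]; rewrite ?hp_service0 // !hp_service_min IH. Qed.

Lemma hp_idle_indep hp x y t : hp_idle hp x t = hp_idle hp y t.
Proof. by rewrite /hp_idle (hp_service_indep hp x y). Qed.

Lemma scaled_first_job_idle hp x h :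
  job_meets_deadline (rcons hp (scale_task h x)) (size hp) 0 ->
  h * C x <= hp_idle hp x ((h - 1) * T x + D x).
Proof.
rewrite /job_meets_deadline nth_rcons_size /= mul1n add0n => /leq_trans; apply.
by rewrite (hp_idle_indep hp x (scale_task h x)) lowest_service_le_idle.
Qed.

Lemma lowest_job_meets_deadline hp x k :
  all (fun tk => 0 < T tk) (rcons hp x) ->
  (forall h, 0 < h <= k.+1 -> h * C x <= hp_idle hp x ((h - 1) * T x + D x)) ->
  job_meets_deadline (rcons hp x) (size hp) k.
Proof.
rewrite all_rcons => /andP[T_gt0 hp_gt0] enough_idle.
rewrite /job_meets_deadline nth_rcons_size; set t := k * T x + D x.
have [u le_ut ->] := lowest_service_busy_window hp x t.
have [j -> le_u_jT] := released_before_jobs x u T_gt0.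
case: (ltnP k j) => [lt_kj | le_jk].
  by apply: leq_trans (leq_addr _ _); rewrite leq_mul2r lt_kj orbT.
set L := (k - j) * T x + D x.
have le_uLt : u + L <= t.
  by rewrite /L /t addnA leq_add2r -(subnKC le_jk) mulnDl subnKC // leq_add2r.
have le_CL : (k - j).+1 * C x <= hp_idle hp x L.
  by have := enough_idle (k - j).+1; rewrite subSS subn0; apply; lia.
have := hp_idle_superadd hp x hp_gt0 u L; have := leq_hp_idle hp x le_uLt.
have : j * C x + (k - j).+1 * C x = k.+1 * C x by rewrite -mulnDl; congr (_ * _); lia.
lia.
Qed.

Theorem lemma1 (hp : seq task) (ti : task) :
  all (fun tk => 0 < T tk) (rcons hp ti) ->
  (forall h, 1 <= h <= hyperperiod (rcons hp ti) %/ T ti ->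
     job_meets_deadline (rcons hp (scale_task h ti)) (size hp) 0) ->
  forall k, k < hyperperiod (rcons hp ti) %/ T ti ->
     job_meets_deadline (rcons hp ti) (size hp) k.
Proof.
move=> periods_gt0 scaled_ok k lt_k.
apply: lowest_job_meets_deadline => // h /andP[h_gt0 le_hk].
by apply/scaled_first_job_idle/scaled_ok; rewrite h_gt0 (leq_trans le_hk lt_k).
Qed.
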